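(* Let $(X,d)$ be a complete metric space with $|X|\geqslant 3$ and let $T\colon X\to X$ be continuous and asymptotically regular. Suppose there exist an upper semi-continuous function $\varphi\colon[0,\infty)\to[0,\infty)$ with $\varphi(t)<t$ for all $t>0$, and a function $F\colon[0,\infty)^3\to[0,\infty)$ with $F(0,0,0)=0$ and $F$ continuous at $(0,0,0)$, such that $$d(Tx,Ty)+d(Ty,Tz)+d(Tx,Tz)\leqslant \varphi\big(\max\{d(x,y),d(y,z),d(z,x)\}\big)+F\big(d(x,Tx),d(y,Ty),d(z,Tz)\big)$$ for all pairwise distinct $x,y,z\in X$. Then $T$ has a fixed point, and $T$ has at most two fixed points.
   Context: A mapping $T\colon X\to X$ on a metric space is asymptotically regular if $\lim_{n\to\infty}d(T^{n+1}x,T^nx)=0$ for every $x\in X$. *)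

From Stdlib Require Import Reals.
Open Scope R_scope.

Definition is_metric {X : Type} (d : X -> X -> R) : Prop :=
  (forall x y, 0 <= d x y) /\
  (forall x y, d x y = 0 <-> x = y) /\
  (forall x y, d x y = d y x) /\
  (forall x y z, d x z <= d x y + d y z).

Definition cauchy_seq {X : Type} (d : X -> X -> R) (u : nat -> X) : Prop :=
  forall eps, 0 < eps -> exists N, forall m n, (N <= m)%nat -> (N <= n)%nat -> d (u m) (u n) < eps.

Definition seq_converges_to {X : Type} (d : X -> X -> R) (u : nat -> X) (l : X) : Prop :=
  forall eps, 0 < eps -> exists N, forall n, (N <= n)%nat -> d (u n) l < eps.

Definition complete_metric {X : Type} (d : X -> X -> R) : Prop :=
  forall u : nat -> X, cauchy_seq d u -> exists l, seq_converges_to d u l.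

Definition metric_continuous {X : Type} (d : X -> X -> R) (T : X -> X) : Prop :=
  forall x eps, 0 < eps -> exists delta, 0 < delta /\
    forall y, d x y < delta -> d (T x) (T y) < eps.

Definition asymptotically_regular {X : Type} (d : X -> X -> R) (T : X -> X) : Prop :=
  forall x, Un_cv (fun n => d (Nat.iter (S n) T x) (Nat.iter n T x)) 0.

Definition usc_on_nonneg (phi : R -> R) : Prop :=
  forall t, 0 <= t -> forall eps, 0 < eps -> exists delta, 0 < delta /\
    forall s, 0 <= s -> Rabs (s - t) < delta -> phi s < phi t + eps.

Definition continuous_at_origin3 (F : R -> R -> R -> R) : Prop :=
  forall eps, 0 < eps -> exists delta, 0 < delta /\
    forall a b c, 0 <= a -> 0 <= b -> 0 <= c -> a < delta -> b < delta -> c < delta ->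
      Rabs (F a b c - F 0 0 0) < eps.

From Stdlib Require Import Reals.
From Stdlib Require Import Lra Lia Classical.
Open Scope R_scope.

(* Follow an orbit x_(n+1) = T x_n, whose steps d(x_(n+1), x_n) tend to 0.
   If the orbit repeats, its periodic points are fixed, because asymptotic
   regularity forces d(T x, x) = 0 for a periodic x.  Otherwise the orbit
   points are pairwise distinct, and the orbit is Cauchy: if not, pick the
   first index m after n with d(x_m, x_n) >= eps; the triple (x_n, x_m, x_(n+1))
   then has diameter close to eps while d(x_(n+1), x_(m+1)) is also close to
   eps, yet the contractive condition, upper semicontinuity of phi at eps and
   continuity of F at the origin bound it by about phi(eps) < eps.  Three distinct fixed points x, y, z would
   give diam <= d(x,y) + d(y,z) + d(x,z) <= phi(diam) < diam. *)

Lemma nat_first_crossing (P : nat -> Prop) (n m : nat) :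
  (n <= m)%nat -> ~ P n -> P m ->
  exists k, (n <= k < m)%nat /\ ~ P k /\ P (S k).
Proof.
  intros Hnm HPn HPm.
  induction m as [|m IH].
  - assert (n = 0)%nat by lia; subst n. contradiction.
  - destruct (Nat.eq_dec n (S m)) as [->|Hne]; [contradiction|].
    destruct (classic (P m)) as [HPm'|HPm'].
    + destruct (IH ltac:(lia) HPm') as [k [Hk HPk]].
      exists k. split; [lia | exact HPk].
    + exists m. split; [lia | auto].
Qed.

Section Metric.

Variables (X : Type) (d : X -> X -> R).
Hypothesis Hmet : is_metric d.

Lemma dist_nonneg x y : 0 <= d x y.
Proof. apply Hmet. Qed.

Lemma dist_eq0 x y : d x y = 0 <-> x = y.
Proof. apply Hmet. Qed.

Lemma dist_sym x y : d x y = d y x.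
Proof. apply Hmet. Qed.

Lemma dist_triangle x y z : d x z <= d x y + d y z.
Proof. apply Hmet. Qed.

Lemma dist_self x : d x x = 0.
Proof. apply dist_eq0. reflexivity. Qed.

Lemma dist_pos x y : x <> y -> 0 < d x y.
Proof.
  intros Hxy. destruct (Rle_lt_or_eq_dec 0 _ (dist_nonneg x y)) as [H|H]; [exact H|].
  exfalso. apply Hxy, dist_eq0. auto.
Qed.

Lemma eq_of_forall_dist_lt x y : (forall e, 0 < e -> d x y < e) -> x = y.
Proof.
  intros Hsmall. apply dist_eq0, Rle_antisym; [|apply dist_nonneg].
  apply Rle_plus_epsilon. intros e He. specialize (Hsmall e He). lra.
Qed.

Lemma not_cauchy_separated (u : nat -> X) :
  ~ cauchy_seq d u ->
  exists eps, 0 < eps /\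
    forall N, exists n m, (N <= n)%nat /\ (n < m)%nat /\ eps <= d (u m) (u n).
Proof.
  intros Hnc. apply NNPP. intros Hsep. apply Hnc. intros eps Heps.
  apply NNPP. intros HnoN. apply Hsep. exists eps. split; [exact Heps|].
  intros N. apply NNPP. intros Hnopair. apply HnoN. exists N.
  intros a b Ha Hb. apply Rnot_le_lt. intros Hab.
  destruct (Nat.lt_trichotomy a b) as [Hlt|[<-|Hlt]].
  - apply Hnopair. exists a, b. rewrite dist_sym. auto.
  - rewrite dist_self in Hab. lra.
  - apply Hnopair. exists b, a. auto.
Qed.

Variable T : X -> X.

Lemma asymptotically_regular_steps x :
  asymptotically_regular d T ->
  forall e, 0 < e -> exists N, forall n, (N <= n)%nat ->
    d (Nat.iter (S n) T x) (Nat.iter n T x) < e.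
Proof.
  intros Hreg e He. destruct (Hreg x e He) as [N HN]. exists N. intros n Hn.
  specialize (HN n Hn). unfold Rdist in HN.
  rewrite Rminus_0_r, Rabs_pos_eq in HN by apply dist_nonneg. exact HN.
Qed.

Lemma periodic_point_fixed (p : nat) (x : X) :
  asymptotically_regular d T -> (0 < p)%nat -> Nat.iter p T x = x -> T x = x.
Proof.
  intros Hreg Hp Hper.
  assert (Hmult : forall k, Nat.iter (p * k) T x = x).
  { induction k as [|k IH]; [now rewrite Nat.mul_0_r|].
    rewrite Nat.mul_succ_r, Nat.iter_add, Hper. exact IH. }
  apply eq_of_forall_dist_lt. intros e He.
  destruct (asymptotically_regular_steps x Hreg e He) as [N HN].
  specialize (HN (p * N)%nat ltac:(nia)).
  simpl in HN. rewrite Hmult in HN. exact HN.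
Qed.

Lemma orbit_limit_fixed (u : nat -> X) (l : X) :
  metric_continuous d T -> (forall n, u (S n) = T (u n)) ->
  seq_converges_to d u l -> T l = l.
Proof.
  intros Hcont Horb Hlim. apply eq_of_forall_dist_lt. intros e He.
  destruct (Hcont l (e / 2)) as [delta [Hdelta HTclose]]; [lra|].
  destruct (Hlim (Rmin delta (e / 2))) as [N HN]; [apply Rmin_glb_lt; lra|].
  pose proof (HN N (le_n N)) as HuN.
  pose proof (HN (S N) (le_S _ _ (le_n N))) as HuSN.
  pose proof (Rmin_l delta (e / 2)). pose proof (Rmin_r delta (e / 2)).
  assert (HT : d (T l) (u (S N)) < e / 2).
  { rewrite Horb. apply HTclose. rewrite dist_sym. lra. }
  pose proof (dist_triangle (T l) (u (S N)) l). lra.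
Qed.

Variables (phi : R -> R) (F : R -> R -> R -> R).
Hypothesis Hphi_usc : usc_on_nonneg phi.
Hypothesis Hphi_lt : forall t, 0 < t -> phi t < t.
Hypothesis HF0 : F 0 0 0 = 0.
Hypothesis HF_cont : continuous_at_origin3 F.
Hypothesis Hcontr : forall x y z, x <> y -> y <> z -> x <> z ->
  d (T x) (T y) + d (T y) (T z) + d (T x) (T z) <=
  phi (Rmax (d x y) (Rmax (d y z) (d z x))) + F (d x (T x)) (d y (T y)) (d z (T z)).

Lemma at_most_two_fixed_points x y z :
  T x = x -> T y = y -> T z = z -> x = y \/ y = z \/ x = z.
Proof.
  intros Hx Hy Hz.
  destruct (classic (x = y)) as [|Hxy]; [auto|].
  destruct (classic (y = z)) as [|Hyz]; [auto|].
  destruct (classic (x = z)) as [|Hxz]; [auto|].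
  exfalso.
  pose proof (Hcontr x y z Hxy Hyz Hxz) as Hc.
  rewrite Hx, Hy, Hz, !dist_self, HF0 in Hc.
  set (t := Rmax (d x y) (Rmax (d y z) (d z x))) in Hc.
  assert (Ht : 0 < t).
  { eapply Rlt_le_trans; [apply (dist_pos x y Hxy) | apply Rmax_l]. }
  assert (t <= d x y + d y z + d x z).
  { unfold t. rewrite (dist_sym z x).
    pose proof (dist_nonneg x y); pose proof (dist_nonneg y z);
      pose proof (dist_nonneg x z).
    apply Rmax_lub; [lra|]. apply Rmax_lub; lra. }
  pose proof (Hphi_lt t Ht). lra.
Qed.

Lemma contraction_gap eps :
  0 < eps ->
  exists eta, 0 < eta /\ eta <= eps /\
    forall x y z, x <> y -> y <> z -> x <> z ->
      d (T x) x < eta -> d (T y) y < eta -> d (T z) z < eta ->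
      eps <= Rmax (d x y) (Rmax (d y z) (d z x)) < eps + 2 * eta ->
      d (T x) (T y) < eps - 2 * eta.
Proof.
  intros Heps.
  set (g := eps - phi eps).
  assert (Hg : 0 < g) by (pose proof (Hphi_lt eps Heps); unfold g; lra).
  destruct (Hphi_usc eps (Rlt_le _ _ Heps) (g / 4)) as [d1 [Hd1 Hphi_near]]; [lra|].
  destruct (HF_cont (g / 4)) as [d2 [Hd2 HF_near]]; [lra|].
  set (eta := Rmin (d1 / 2) (Rmin d2 (Rmin (g / 4) eps))).
  assert (Heta_d1 : eta <= d1 / 2) by apply Rmin_l.
  assert (Heta_d2 : eta <= d2)
    by (eapply Rle_trans; [apply Rmin_r | apply Rmin_l]).
  assert (Heta_g : eta <= g / 4)
    by (eapply Rle_trans; [apply Rmin_r|]; eapply Rle_trans; [apply Rmin_r | apply Rmin_l]).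
  assert (Heta_eps : eta <= eps)
    by (eapply Rle_trans; [apply Rmin_r|]; eapply Rle_trans; apply Rmin_r).
  assert (Heta : 0 < eta) by (unfold eta; repeat apply Rmin_glb_lt; lra).
  exists eta. split; [exact Heta|]. split; [exact Heta_eps|].
  intros x y z Hxy Hyz Hxz Hx Hy Hz [Ht_lo Ht_hi].
  pose proof (Hcontr x y z Hxy Hyz Hxz) as Hc.
  set (t := Rmax (d x y) (Rmax (d y z) (d z x))) in *.
  assert (Hphi_t : phi t < phi eps + g / 4).
  { apply Hphi_near; [lra|]. rewrite Rabs_pos_eq; lra. }
  assert (HF_small : F (d x (T x)) (d y (T y)) (d z (T z)) < g / 4).
  { rewrite (dist_sym x), (dist_sym y), (dist_sym z).
    pose proof (HF_near (d (T x) x) (d (T y) y) (d (T z) z)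
                  (dist_nonneg _ _) (dist_nonneg _ _) (dist_nonneg _ _)
                  ltac:(lra) ltac:(lra) ltac:(lra)) as HF_abs.
    rewrite HF0, Rminus_0_r in HF_abs.
    pose proof (Rle_abs (F (d (T x) x) (d (T y) y) (d (T z) z))). lra. }
  pose proof (dist_nonneg (T y) (T z)). pose proof (dist_nonneg (T x) (T z)).
  unfold g in *. lra.
Qed.

Lemma injective_orbit_cauchy (u : nat -> X) :
  (forall n, u (S n) = T (u n)) ->
  (forall n m, n <> m -> u n <> u m) ->
  (forall e, 0 < e -> exists N, forall n, (N <= n)%nat -> d (u (S n)) (u n) < e) ->
  cauchy_seq d u.
Proof.
  intros Horb Hinj Hsteps. apply NNPP. intros Hnc.
  destruct (not_cauchy_separated u Hnc) as [eps [Heps Hsep]].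
  destruct (contraction_gap eps Heps) as [eta [Heta [Heta_eps Hgap]]].
  destruct (Hsteps eta Heta) as [N HN].
  destruct (Hsep N) as [n [m [HNn [Hnm Hfar]]]].
  assert (Hstart : ~ eps <= d (u n) (u n)) by (rewrite dist_self; lra).
  destruct (nat_first_crossing (fun k => eps <= d (u k) (u n)) n m
              ltac:(lia) Hstart Hfar) as [k [Hk [Hnear Hcross]]].
  apply Rnot_le_lt in Hnear.
  assert (Hn1 : d (u (S n)) (u n) < eta) by (apply HN; lia).
  assert (Hn2 : d (u (S (S n))) (u (S n)) < eta) by (apply HN; lia).
  assert (Hk1 : d (u (S k)) (u k) < eta) by (apply HN; lia).
  assert (Hk2 : d (u (S (S k))) (u (S k)) < eta) by (apply HN; lia).
  assert (Hnk : n <> k) by (intros <-; lra).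
  assert (Hclose : d (u (S n)) (u (S (S k))) < eps - 2 * eta).
  { rewrite (Horb n), (Horb (S k)).
    apply (Hgap (u n) (u (S k)) (u (S n))); try (apply Hinj; lia); repeat rewrite <- Horb; try assumption.
    rewrite (dist_sym (u n) (u (S k))).
    pose proof (dist_triangle (u (S k)) (u k) (u n)).
    pose proof (dist_triangle (u (S k)) (u n) (u (S n))).
    rewrite (dist_sym (u n) (u (S n))) in *.
    split; [eapply Rle_trans; [exact Hcross | apply Rmax_l]|].
    apply Rmax_lub_lt; [lra|]. apply Rmax_lub_lt; lra. }
  pose proof (dist_triangle (u n) (u (S n)) (u (S k))).
  pose proof (dist_triangle (u (S n)) (u (S (S k))) (u (S k))).
  rewrite (dist_sym (u n) (u (S n))), (dist_sym (u n) (u (S k))) in *.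
  lra.
Qed.

Hypothesis Hcomp : complete_metric d.
Hypothesis Hcont : metric_continuous d T.
Hypothesis Hreg : asymptotically_regular d T.

Lemma exists_fixed_point (x0 : X) : exists x, T x = x.
Proof.
  set (u := fun n => Nat.iter n T x0).
  destruct (classic (exists n m, (n < m)%nat /\ u n = u m))
    as [[n [m [Hnm Hrep]]] | Hnorep].
  - exists (u n). apply (periodic_point_fixed (m - n)); [exact Hreg | lia |].
    unfold u. rewrite <- Nat.iter_add, Nat.sub_add by lia. symmetry. exact Hrep.
  - assert (Hinj : forall n m, n <> m -> u n <> u m).
    { intros n m Hnm Heq. apply Hnorep.
      destruct (Nat.lt_gt_cases n m) as [[Hlt|Hlt] _]; [exact Hnm| |].
      - exists n, m. auto.
      - exists m, n. auto. }
    assert (Hcau : cauchy_seq d u).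
    { apply injective_orbit_cauchy; [reflexivity | exact Hinj |].
      exact (asymptotically_regular_steps x0 Hreg). }
    destruct (Hcomp u Hcau) as [l Hl].
    exists l. exact (orbit_limit_fixed u l Hcont (fun n => eq_refl) Hl).
Qed.

End Metric.

Theorem theorem4p11 (X : Type) (d : X -> X -> R) (T : X -> X)
  (phi : R -> R) (F : R -> R -> R -> R)
  (Hmet : is_metric d) (Hcomp : complete_metric d)
  (H3 : exists a b c : X, a <> b /\ b <> c /\ a <> c)
  (Hcont : metric_continuous d T) (Hreg : asymptotically_regular d T)
  (Hphi_nonneg : forall t, 0 <= t -> 0 <= phi t)
  (Hphi_usc : usc_on_nonneg phi)
  (Hphi_lt : forall t, 0 < t -> phi t < t)
  (HF_nonneg : forall a b c, 0 <= a -> 0 <= b -> 0 <= c -> 0 <= F a b c)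
  (HF0 : F 0 0 0 = 0)
  (HF_cont : continuous_at_origin3 F)
  (Hcontr : forall x y z, x <> y -> y <> z -> x <> z ->
     d (T x) (T y) + d (T y) (T z) + d (T x) (T z) <=
     phi (Rmax (d x y) (Rmax (d y z) (d z x))) + F (d x (T x)) (d y (T y)) (d z (T z))) :
  (exists x, T x = x) /\
  (forall x y z, T x = x -> T y = y -> T z = z -> x = y \/ y = z \/ x = z).
Proof.
  destruct H3 as [x0 _].
  split.
  - exact (exists_fixed_point X d Hmet T phi F Hphi_usc Hphi_lt HF0 HF_cont Hcontr
             Hcomp Hcont Hreg x0).
  - exact (at_most_two_fixed_points X d Hmet T phi F Hphi_lt HF0 Hcontr).
Qed.
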